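(* Let $(\mathcal{M},\times,1)$ be a cartesian monoidal category with equivalences. Let $Y:\Gamma^{\mathrm{op}}\to\mathcal{M}$ be a functor and let $(X,\xi):(\Phi,+,0)\to(\mathcal{M},\times,1)$ be the colax symmetric monoidal functor corresponding to $Y$ (as described in the context). The following are equivalent: (1) $(X,\xi)$ is a homotopy commutative monoid in $\mathcal{M}$, i.e. $\xi_0$ and every $\xi_{m,n}$ ($m,n\ge0$) are equivalences; (2) for all $m,n\ge 0$ the map $(Y(\pi^1_{m,n}),Y(\pi^2_{m,n})):Y[m+n]\to Y[m]\times Y[n]$ is an equivalence, and so is the unique map $Y[0]\to 1$; (3) for every $n\ge 0$ the map $(Y(\rho^n_0),\dots,Y(\rho^n_{n-1})):Y[n]\to Y[1]^n$ is an equivalence.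
   Context: A monoidal category with equivalences is a monoidal category $\mathcal{M}$ with a class $\mathcal{E}$ of morphisms (the equivalences) such that: every isomorphism is in $\mathcal{E}$; if $h=g\circ f$ and two of $f,g,h$ are in $\mathcal{E}$ then so is the third; if $f,f'\in\mathcal{E}$ then $f\otimes f'\in\mathcal{E}$. It is cartesian if the monoidal structure is given by chosen binary products $\times$ and a terminal object $1$. $\Phi$: objects $n=\{0,\dots,n-1\}$ ($n\ge0$), all functions, symmetric monoidal under disjoint union $+$ with unit $0$. $\Gamma^{\mathrm{op}}$: objects $[n]=\{0,\dots,n\}$, morphisms basepoint-preserving functions ($g(0)=0$). Maps in $\Gamma^{\mathrm{op}}$: $\pi^1_{m,n}:[m+n]\to[m]$, $\pi^1_{m,n}(i)=i$ for $i\le m$ and $0$ for $i>m$; $\pi^2_{m,n}:[m+n]\to[n]$, $\pi^2_{m,n}(i)=0$ for $i\le m$ and $i-m$ for $i>m$; for $0\le j<n$, $\rho^n_j:[n]\to[1]$, $\rho^n_j(i)=1$ if $i=j+1$ and $0$ otherwise. Correspondence: given $Y$, set $X(n)=Y[n]$; for $f:n\to n'$ in $\Phi$ set $X(f)=Y(g_f)$ where $g_f:[n]\to[n']$, $g_f(0)=0$, $g_f(i)=1+f(i-1)$ for $1\le i\le n$; $\xi_0:X(0)\to 1$ is the unique map; $\xi_{m,n}=(Y(\pi^1_{m,n}),Y(\pi^2_{m,n})):X(m+n)\to X(m)\times X(n)$. This defines a colax symmetric monoidal functor (a functor $X$ with natural maps $\xi_{A,B}:X(A+B)\to X(A)\times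 X(B)$, $\xi_0:X(0)\to 1$ satisfying the coassociativity, counit and symmetry axioms of a symmetric monoidal functor, not necessarily invertible), and every colax symmetric monoidal functor $(\Phi,+,0)\to(\mathcal{M},\times,1)$ arises from exactly one $Y$ in this way. *)

From mathcomp Require Import all_boot.
Set Implicit Arguments. Unset Strict Implicit. Unset Printing Implicit Defensive.

Record CartCatEq := {
  ob : Type;
  hom : ob -> ob -> Type;
  idm : forall a, hom a a;
  comp : forall a b c, hom b c -> hom a b -> hom a c;
  comp_idl : forall a b (f : hom a b), comp (idm b) f = f;
  comp_idr : forall a b (f : hom a b), comp f (idm a) = f;
  comp_assoc : forall a b c d (h : hom c d) (g : hom b c) (f : hom a b),
      comp h (comp g f) = comp (comp h g) f;
  one : ob;
  bang : forall a, hom a one;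
  bang_uniq : forall a (f : hom a one), f = bang a;
  prod : ob -> ob -> ob;
  p1 : forall a b, hom (prod a b) a;
  p2 : forall a b, hom (prod a b) b;
  pair : forall c a b, hom c a -> hom c b -> hom c (prod a b);
  p1_pair : forall c a b (f : hom c a) (g : hom c b), comp (p1 a b) (pair f g) = f;
  p2_pair : forall c a b (f : hom c a) (g : hom c b), comp (p2 a b) (pair f g) = g;
  pair_uniq : forall c a b (h : hom c (prod a b)),
      h = pair (comp (p1 a b) h) (comp (p2 a b) h);
  E : forall a b, hom a b -> Prop;
  E_iso : forall a b (f : hom a b) (g : hom b a),
      comp g f = idm a -> comp f g = idm b -> E f;
  E_2of3_gf : forall a b c (f : hom a b) (g : hom b c), E f -> E g -> E (comp g f);
  E_2of3_f : forall a b c (f : hom a b) (g : hom b c), E g -> E (comp g f) -> E f;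
  E_2of3_g : forall a b c (f : hom a b) (g : hom b c), E f -> E (comp g f) -> E g;
  E_tensor : forall a b a' b' (f : hom a b) (f' : hom a' b'), E f -> E f' ->
      E (pair (comp f (p1 a a')) (comp f' (p2 a a')))
}.
Arguments idm {M} a : rename.
Arguments comp {M a b c} : rename.
Arguments one {M} : rename.
Arguments bang {M} a : rename.
Arguments prod {M} : rename.
Arguments p1 {M} a b : rename.
Arguments p2 {M} a b : rename.
Arguments pair {M c a b} : rename.
Arguments E {M a b} : rename.

Fixpoint pow (M : CartCatEq) (a : ob M) (n : nat) : ob M :=
  match n with
  | 0 => one
  | 1 => a
  | S ((S _) as k) => prod a (pow a k)
  end.

(* tuple (f 0, ..., f (n-1)) : y -> a^n *)
Fixpoint tup (M : CartCatEq) (y a : ob M) (f : nat -> hom y a) (n : nat)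
  {struct n} : hom y (pow a n) :=
  match n return hom y (pow a n) with
  | 0 => bang y
  | S k =>
    match k return hom y (pow a k) -> hom y (pow a k.+1) with
    | 0 => fun _ => f 0
    | S k' => fun t => pair (f 0) t
    end (@tup M y a (fun j => f j.+1) k)
  end.

(* The category Gamma^op: objects [n] = {0,..,n}, i.e. 'I_n.+1, morphisms  *)
(* basepoint-preserving functions.                                        *)
Definition GHom (n m : nat) := {g : {ffun 'I_n.+1 -> 'I_m.+1} | g ord0 == ord0}.

Lemma gid_bp n : [ffun i : 'I_n.+1 => i] ord0 == ord0.
Proof. by rewrite ffunE. Qed.
Definition gid n : GHom n n := exist (fun g : {ffun _ -> _} => g ord0 == ord0) _ (gid_bp n).

Lemma gcomp_bp n m p (g : GHom m p) (f : GHom n m) :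
  [ffun i => sval g (sval f i)] ord0 == ord0.
Proof. by rewrite ffunE (eqP (svalP f)) (eqP (svalP g)). Qed.
Definition gcomp n m p (g : GHom m p) (f : GHom n m) : GHom n p :=
  exist (fun g : {ffun _ -> _} => g ord0 == ord0) _ (gcomp_bp g f).

Lemma inord0_bp m : (@inord m 0) == ord0.
Proof. by apply/eqP/val_inj; rewrite /= inordK. Qed.

Lemma pi1_bp m n :
  [ffun i : 'I_(m + n).+1 => @inord m (if i <= m then (i : nat) else 0)] ord0 == ord0.
Proof. by apply/eqP/val_inj; rewrite ffunE /= ?sub0n ?if_same inordK. Qed.
Definition pi1 m n : GHom (m + n) m := exist (fun g : {ffun _ -> _} => g ord0 == ord0) _ (pi1_bp m n).

Lemma pi2_bp m n :
  [ffun i : 'I_(m + n).+1 => @inord n (if i <= m then 0 else i - m)] ord0 == ord0.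
Proof. by apply/eqP/val_inj; rewrite ffunE /= ?sub0n ?if_same inordK. Qed.
Definition pi2 m n : GHom (m + n) n := exist (fun g : {ffun _ -> _} => g ord0 == ord0) _ (pi2_bp m n).

Lemma rho_bp n j :
  [ffun i : 'I_n.+1 => @inord 1 (if (i : nat) == j.+1 then 1 else 0)] ord0 == ord0.
Proof. by apply/eqP/val_inj; rewrite ffunE /= inordK. Qed.
Definition rho n j : GHom n 1 := exist (fun g : {ffun _ -> _} => g ord0 == ord0) _ (rho_bp n j).

Record GammaFunctor (M : CartCatEq) := {
  Yob : nat -> ob M;
  Ymap : forall n m, GHom n m -> hom (Yob n) (Yob m);
  Ymap_id : forall n, Ymap (gid n) = idm (Yob n);
  Ymap_comp : forall n m p (g : GHom m p) (f : GHom n m),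
      Ymap (gcomp g f) = comp (Ymap g) (Ymap f)
}.
Arguments Yob {M} y n : rename.
Arguments Ymap {M} y {n m} : rename.

(* Phi: objects n = 'I_n, morphisms all functions {ffun 'I_n -> 'I_n'}.     *)
Definition gf_fun n n' (f : {ffun 'I_n -> 'I_n'}) (i : 'I_n.+1) : 'I_n'.+1 :=
  match unlift ord0 i with
  | None => ord0
  | Some k => lift ord0 (f k)
  end.
Lemma gf_bp n n' (f : {ffun 'I_n -> 'I_n'}) : [ffun i => gf_fun f i] ord0 == ord0.
Proof. by rewrite ffunE /gf_fun unlift_none. Qed.
Definition gf n n' (f : {ffun 'I_n -> 'I_n'}) : GHom n n' := exist (fun g : {ffun _ -> _} => g ord0 == ord0) _ (gf_bp f).

Section X.
Variables (M : CartCatEq) (Y : GammaFunctor M).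
Definition Xob (n : nat) : ob M := Yob Y n.
Definition Xmap n n' (f : {ffun 'I_n -> 'I_n'}) : hom (Xob n) (Xob n') := Ymap Y (gf f).
Definition xi0 : hom (Xob 0) one := bang (Xob 0).
Definition xi (m n : nat) : hom (Xob (m + n)) (prod (Xob m) (Xob n)) :=
  pair (Ymap Y (pi1 m n)) (Ymap Y (pi2 m n)).

Definition hcm : Prop := E xi0 /\ forall m n, E (xi m n).
End X.

From mathcomp Require Import all_boot zify.

Set Implicit Arguments.
Unset Strict Implicit.
Unset Printing Implicit Defensive.

(** Condition (2) is condition (1) verbatim: [xi m n] is the map of (2) and
    [xi0] is [Y[0] -> 1].  For [n >= 1] the Segal map [Y[n+1] -> Y[1]^(n+1)] factors as
    [(id x segal n) o xi 1 n], so by two-out-of-three (2) gives (3) by induction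
    on [n], and (3) makes every [xi 1 n] an equivalence.  Since the Segal map
    for [n = 0] is [Y[0] -> 1], (3) also makes [p2 : Y[0] x Y[n] -> Y[n]] an
    equivalence, and [p2 o xi 0 n = id].  Finally the coassociativity square
    [assoc o (xi 1 m x id) o xi (m+1) n = (id x xi m n) o xi 1 (m+n)]
    yields [xi (m+1) n] from [xi 1 m], [xi 1 (m+n)] and, inductively, [xi m n]. *)

Lemma comp_pair {M : CartCatEq} (x y a b : ob M)
    (f : hom x a) (g : hom x b) (h : hom y x) :
  comp (pair f g) h = pair (comp f h) (comp g h).
Proof. by rewrite (pair_uniq (comp (pair f g) h)) !comp_assoc p1_pair p2_pair. Qed.

Ltac cat_simpl := rewrite ?comp_idl ?comp_idr;
  repeat (rewrite -comp_assoc || rewrite comp_pair || rewrite p1_pair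
          || rewrite p2_pair || rewrite comp_idl || rewrite comp_idr).

Section CartesianCategory.
Context {M : CartCatEq}.
Implicit Types a b c x y : ob M.

Definition prodm a b a' b' (f : hom a b) (f' : hom a' b') :
    hom (prod a a') (prod b b') :=
  pair (comp f (p1 a a')) (comp f' (p2 a a')).

Definition assocm a b c : hom (prod (prod a b) c) (prod a (prod b c)) :=
  pair (comp (p1 a b) (p1 (prod a b) c))
       (pair (comp (p2 a b) (p1 (prod a b) c)) (p2 (prod a b) c)).

Lemma pair_ext x a b (h h' : hom x (prod a b)) :
  comp (p1 a b) h = comp (p1 a b) h' -> comp (p2 a b) h = comp (p2 a b) h' ->
  h = h'.
Proof. by move=> e1 e2; rewrite (pair_uniq h) (pair_uniq h') e1 e2. Qed.

Lemma E_idm a : E (idm a).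
Proof. by apply: (E_iso (g := idm a)); rewrite comp_idl. Qed.

Lemma E_prodm a b a' b' (f : hom a b) (f' : hom a' b') :
  E f -> E f' -> E (prodm f f').
Proof. exact: E_tensor. Qed.

Lemma E_prodm_idl a a' b' (f' : hom a' b') : E f' -> E (prodm (idm a) f').
Proof. exact: E_prodm (E_idm a). Qed.

Lemma E_prodm_idr a b a' (f : hom a b) : E f -> E (prodm f (idm a')).
Proof. by move/E_prodm; apply; apply: E_idm. Qed.

Lemma E_p1 a b : E (bang b) -> E (p1 a b).
Proof.
move=> Eb; have -> : p1 a b = comp (p1 a one) (prodm (idm a) (bang b)).
  by rewrite p1_pair comp_idl.
apply: E_2of3_gf; first exact: E_prodm_idl.
apply: (E_iso (g := pair (idm a) (bang a))); last by rewrite p1_pair.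
apply: pair_ext; first by rewrite comp_assoc p1_pair comp_idl comp_idr.
by rewrite comp_assoc p2_pair comp_idr (bang_uniq (comp _ _)) (bang_uniq (p2 a one)).
Qed.

Lemma E_p2 a b : E (bang a) -> E (p2 a b).
Proof.
move=> Ea; have -> : p2 a b = comp (p2 one b) (prodm (bang a) (idm b)).
  by rewrite p2_pair comp_idl.
apply: E_2of3_gf; first exact: E_prodm_idr.
apply: (E_iso (g := pair (bang b) (idm b))); last by rewrite p2_pair.
apply: pair_ext; last by rewrite comp_assoc p2_pair comp_idl comp_idr.
by rewrite comp_assoc p1_pair comp_idr (bang_uniq (comp _ _)) (bang_uniq (p1 one b)).
Qed.

Lemma E_assocm a b c : E (assocm a b c).
Proof.
apply: (E_iso (g := pair (pair (p1 a (prod b c)) (comp (p1 b c) (p2 a (prod b c))))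
                         (comp (p2 b c) (p2 a (prod b c))))).
  by apply: pair_ext; cat_simpl => //; apply: pair_ext; cat_simpl.
by apply: pair_ext; cat_simpl => //; apply: pair_ext; cat_simpl.
Qed.

Lemma tupSS x a (f : nat -> hom x a) n :
  tup f n.+2 = pair (f 0) (tup (fun j => f j.+1) n.+1).
Proof. by []. Qed.

Lemma eq_tup x a (f g : nat -> hom x a) n :
  (forall j, f j = g j) -> tup f n = tup g n.
Proof.
elim: n f g => [|[|n] IH] f g efg //; first exact: efg.
by rewrite !tupSS (efg 0) (IH (fun j => f j.+1) (fun j => g j.+1)).
Qed.

Lemma tup_comp x y a (f : nat -> hom x a) (h : hom y x) n :
  comp (tup f n) h = tup (fun j => comp (f j) h) n.
Proof.
elim: n f => [|[|n] IH] f //; first by rewrite (bang_uniq (comp _ _)).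
by rewrite !tupSS comp_pair IH.
Qed.

End CartesianCategory.

Lemma inordE n k : (@inord n k : nat) = if k < n.+1 then k else 0.
Proof. by rewrite /inord /insubd; case: insubP => [u -> ->|/negbTE ->]. Qed.

Lemma ghom_ext n m (g f : GHom n m) :
  (forall i, (sval g i : nat) = sval f i) -> g = f.
Proof. by move=> efg; apply/val_inj/ffunP => i; apply/val_inj/efg. Qed.

Ltac ghom_solve := apply: ghom_ext => -[k hk];
  rewrite /= ?ffunE /= ?inordE /=; repeat case: ifP; lia.

Lemma rho_1_0 : rho 1 0 = gid 1.
Proof. ghom_solve. Qed.
Lemma rho_0_pi1 n : rho n.+1 0 = pi1 1 n.
Proof. ghom_solve. Qed.
Lemma rho_pi2 n j : gcomp (rho n j) (pi2 1 n) = rho n.+1 j.+1.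
Proof. ghom_solve. Qed.
Lemma pi1_1_0 : pi1 1 0 = gid 1.
Proof. ghom_solve. Qed.
Lemma pi2_0 n : pi2 0 n = gid n.
Proof. ghom_solve. Qed.
Lemma pi1_1_pi1 m n : gcomp (pi1 1 m) (pi1 m.+1 n) = pi1 1 (m + n).
Proof. ghom_solve. Qed.
Lemma pi2_1_pi1 m n : gcomp (pi2 1 m) (pi1 m.+1 n) = gcomp (pi1 m n) (pi2 1 (m + n)).
Proof. ghom_solve. Qed.
Lemma pi2_S m n : pi2 m.+1 n = gcomp (pi2 m n) (pi2 1 (m + n)).
Proof. ghom_solve. Qed.

Section SegalMaps.
Variables (M : CartCatEq) (Y : GammaFunctor M).

Definition segal n : hom (Yob Y n) (pow (Yob Y 1) n) :=
  tup (fun j => Ymap Y (rho n j)) n.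

Lemma segal_S k : segal k.+2 = comp (prodm (idm _) (segal k.+1)) (xi Y 1 k.+1).
Proof.
rewrite /segal /xi /prodm; cat_simpl; rewrite tup_comp tupSS rho_0_pi1.
rewrite (eq_tup (g := fun j => comp (Ymap Y (rho k.+1 j)) (Ymap Y (pi2 1 k.+1)))) //.
by move=> j; rewrite -Ymap_comp rho_pi2.
Qed.

Lemma xi_coassoc m n :
  comp (assocm _ _ _) (comp (prodm (xi Y 1 m) (idm (Xob Y n))) (xi Y m.+1 n)) =
  comp (prodm (idm _) (xi Y m n)) (xi Y 1 (m + n)).
Proof.
rewrite /xi /assocm /prodm; cat_simpl.
by rewrite -!Ymap_comp pi1_1_pi1 pi2_1_pi1 -pi2_S.
Qed.

Lemma E_segal : hcm Y -> forall n, E (segal n).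
Proof.
move=> [E0 Exi]; elim=> [|[|k] IH]; first exact: E0.
  by rewrite /segal /= rho_1_0 Ymap_id; apply: E_idm.
by rewrite segal_S; apply: E_2of3_gf (Exi 1 k.+1) (E_prodm_idl _ IH).
Qed.

Lemma E_xi0 : E (xi0 Y) -> forall n, E (xi Y 0 n).
Proof.
move=> E0 n; apply: (E_2of3_f (g := p2 _ _)); first exact: E_p2.
by rewrite /xi p2_pair pi2_0 Ymap_id; apply: E_idm.
Qed.

Lemma E_xi1 : (forall n, E (segal n)) -> forall n, E (xi Y 1 n).
Proof.
move=> Eseg [|k].
  apply: (E_2of3_f (g := p1 _ _)); first exact/E_p1/(Eseg 0).
  by rewrite /xi p1_pair pi1_1_0 Ymap_id; apply: E_idm.
apply: E_2of3_f (E_prodm_idl _ (Eseg k.+1)) _.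
by rewrite -segal_S.
Qed.

Lemma E_xi_of_xi1 :
  E (xi0 Y) -> (forall n, E (xi Y 1 n)) -> forall m n, E (xi Y m n).
Proof.
move=> E0 Exi1; elim=> [|m IH] n; first exact: E_xi0.
apply: E_2of3_f (E_prodm_idr _ (Exi1 m)) _.
apply: E_2of3_f (E_assocm _ _ _) _.
by rewrite xi_coassoc; apply: E_2of3_gf (Exi1 _) (E_prodm_idl _ (IH n)).
Qed.

End SegalMaps.

Theorem proposition3p1p2 (M : CartCatEq) (Y : GammaFunctor M) :
  (hcm Y <->
   ((forall m n : nat,
       E (pair (Ymap Y (pi1 m n)) (Ymap Y (pi2 m n)))) /\
    E (bang (Yob Y 0))))
  /\
  (((forall m n : nat,
       E (pair (Ymap Y (pi1 m n)) (Ymap Y (pi2 m n)))) /\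
    E (bang (Yob Y 0)))
   <->
   (forall n : nat, E (tup (fun j => Ymap Y (rho n j)) n))).
Proof.
have hcmE : hcm Y <-> (forall m n, E (xi Y m n)) /\ E (xi0 Y).
  by split=> -[].
split; first exact: hcmE.
rewrite -hcmE; split; first exact: E_segal.
move=> Eseg; have E0 : E (xi0 Y) := Eseg 0.
by split=> //; apply: E_xi_of_xi1 E0 (E_xi1 Eseg).
Qed.
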